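(* Let $m$ be even, let $C=\{c_1,\dots,c_m\}$ with axis $c_1\lhd\dots\lhd c_m$, and let $v$ be a random vote sampled from the Conitzer distribution $\mathcal{D}_{\mathrm{SP}}^{\mathrm{Con}}$ for this axis. For $j\in[m/2]$ and $i\in[m]$: \[\mathbb{P}[\mathrm{pos}_v(c_j)=i]=\begin{cases}2/(2m) & \text{if } i<j,\\ (j+1)/(2m) & \text{if } i=j,\\ 1/(2m) & \text{if } j<i<m-j+1,\\ (m-j+1)/(2m) & \text{if } i=m-j+1,\\ 0 & \text{if } i>m-j+1.\end{cases}\] Further, for each $j\in[m]$ and each $i\in[m]$, $\mathbb{P}[\mathrm{pos}_v(c_j)=i]=\mathbb{P}[\mathrm{pos}_v(c_{m-j+1})=i]$.
   Context: A vote over $C$ is a total order on $C$; $\mathrm{pos}_v(c)$ is the position of $c$ in $v$ (top position is 1). The Conitzer (random peak) distribution for the axis $c_1\lhd\dots\lhd c_m$ generates a vote as follows: pick a candidate uniformly at random and rank it first; then in each of $m-1$ iterations, the already selected candidates form an interval $\{c_a,\dots,c_b\}$ of the axis, and one chooses uniformly at random among the candidates $c_{a-1}$ and $c_{b+1}$ that exist (if only one exists it is chosen with probability 1) and places it in the highest still-available position. *)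

From HB Require Import structures.
From mathcomp Require Import all_boot all_order all_algebra all_fingroup.
Set Implicit Arguments. Unset Strict Implicit. Unset Printing Implicit Defensive.
Import Order.TTheory GRing.Theory Num.Theory.
Local Open Scope ring_scope.

(* Candidates c_1,...,c_m are encoded 0-indexed as 0,...,m-1, with the axis
   order c_1 < ... < c_m being the natural order on indices.
   A vote is a permutation v : 'I_m -> 'I_m, where v k is the candidate in
   position k+1 (position 0 is the top). *)

(* Probability weight of the remaining choices [s] of the Conitzer process,
   given that the already selected candidates form the interval [a, b]
   (inclusive, 0-indexed). *)
Fixpoint con_ext (m a b : nat) (s : seq nat) : rat :=
  match s with
  | [::] => 1
  | x :: s' =>
      let lft := (0 < a)%N in
      let rgt := (b.+1 < m)%N in
      if lft && (x == a.-1) then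
        (if rgt then 2^-1 else 1) * con_ext m a.-1 b s'
      else if rgt && (x == b.+1) then
        (if lft then 2^-1 else 1) * con_ext m a b.+1 s'
      else 0
  end.

(* Probability that the Conitzer process produces the ranking [s]
   (top candidate first). The first candidate is uniform among the m. *)
Definition con_prob (m : nat) (s : seq nat) : rat :=
  match s with
  | [::] => 0
  | x :: s' => if (x < m)%N then (m%:R)^-1 * con_ext m x x s' else 0
  end.

Definition vote_seq (m : nat) (v : {perm 'I_m}) : seq nat :=
  [seq val (v k) | k <- enum 'I_m].

(* P[pos_v(c_j) = i] for 1-indexed j and i. *)
Definition prob_pos (m j i : nat) : rat :=
  \sum_(v : {perm 'I_m} |
         [exists k : 'I_m, (val k == i.-1) && (val (v k) == j.-1)])
     con_prob m (vote_seq v).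

From mathcomp Require Import all_boot all_order all_algebra all_fingroup.
From mathcomp Require Import zify ring.

(* After k steps of the Conitzer process the selected candidates form an
   interval [a, a + k] of the axis.  Induction on k shows that m times the
   probability of each such interval is 1, plus k/2 for the two intervals
   touching an end of the axis: an interval away from the ends grows to
   either side with probability 1/2, while [0, k] can only grow to the right
   and so passes its whole mass to [0, k + 1].  Candidate c gets position k + 2 exactly when the
   interval after k steps is adjacent to c and the next step goes towards c;
   this gives an explicit formula for P[pos_v(c) = k + 2], invariant under
   reversing the axis, and the theorem is a case analysis of it. *)

Set Implicit Arguments.
Unset Strict Implicit.
Unset Printing Implicit Defensive.
Import GRing.Theory Num.Theory.
Local Open Scope ring_scope.

Section BoundedSeqs.

Variable R : nmodType.

Fixpoint bounded_seqs (m n : nat) : seq (seq nat) :=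
  if n is n'.+1 then [seq x :: s | x <- iota 0 m, s <- bounded_seqs m n']
  else [:: [::]].

Lemma big_bounded_seqs0 m (F : seq nat -> R) :
  \sum_(s <- bounded_seqs m 0) F s = F [::].
Proof. by rewrite big_seq1. Qed.

Lemma big_bounded_seqsS m n (F : seq nat -> R) :
  \sum_(s <- bounded_seqs m n.+1) F s =
  \sum_(0 <= x < m) \sum_(s <- bounded_seqs m n) F (x :: s).
Proof. by rewrite big_allpairs_dep /index_iota subn0. Qed.

Lemma big_bounded_seqs_cat m n1 n2 (F : seq nat -> R) :
  \sum_(s <- bounded_seqs m (n1 + n2)) F s =
  \sum_(p <- bounded_seqs m n1) \sum_(r <- bounded_seqs m n2) F (p ++ r).
Proof.
elim: n1 F => [|n1 IH] F; first by rewrite big_bounded_seqs0.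
by rewrite addSn !big_bounded_seqsS; apply: eq_bigr => x _; apply: IH.
Qed.

End BoundedSeqs.

Lemma mem_bounded_seqs m n s :
  (s \in bounded_seqs m n) = (size s == n) && all (fun x => x < m)%N s.
Proof.
elim: n s => [|n IH] [|x s] //=.
  by apply/allpairsP => -[[y t] []].
apply/allpairsP/idP => [[[y t] /= [y_in t_in [-> ->]]]|/and3P[size_s x_lt s_lt]].
  by move: y_in t_in; rewrite mem_iota add0n IH eqSS => /andP[_ ->] /andP[-> ->].
by exists (x, s); rewrite mem_iota add0n IH -eqSS size_s x_lt s_lt.
Qed.

Lemma bounded_seqs_uniq m n : uniq (bounded_seqs m n).
Proof.
elim: n => [|n IH] //=.
by apply: allpairs_uniq => [||[x s] [y t] _ _ [-> ->]]; rewrite ?iota_uniq.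
Qed.

Section Votes.

Variable m : nat.

Lemma nth_vote_seq (v : {perm 'I_m}) (k : 'I_m) :
  nth 0%N (vote_seq v) k = val (v k).
Proof. by rewrite (nth_map k) ?size_enum_ord ?nth_ord_enum. Qed.

Lemma size_vote_seq (v : {perm 'I_m}) : size (vote_seq v) = m.
Proof. by rewrite size_map size_enum_ord. Qed.

Lemma vote_seq_inj : injective (@vote_seq m).
Proof.
by move=> v w E; apply/permP => k; apply: val_inj; rewrite -!nth_vote_seq E.
Qed.

Lemma mem_vote_seqs s :
  (s \in map (@vote_seq m) (enum {perm 'I_m})) =
  uniq s && (s \in bounded_seqs m m).
Proof.
rewrite mem_bounded_seqs; apply/mapP/and3P => [[v _ ->]|[uniq_s /eqP size_s s_lt]].
  rewrite size_vote_seq /vote_seq map_inj_uniq ?enum_uniq; last first.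
    by move=> a b /val_inj/perm_inj.
  by split=> //; apply/allP => _ /mapP[k _ ->]; apply: ltn_ord.
have nth_lt (k : 'I_m) : (nth 0 s k < m)%N by apply: (all_nthP 0 s_lt); rewrite size_s.
pose f k := Ordinal (nth_lt k).
have f_inj : injective f.
  by move=> k1 k2 [/eqP]; rewrite nth_uniq ?size_s // => /eqP/val_inj.
exists (perm f_inj); rewrite ?mem_enum //.
apply: (@eq_from_nth _ 0%N) => [|i]; rewrite ?size_vote_seq ?size_s // => lt_im.
by rewrite (nth_vote_seq _ (Ordinal lt_im)) permE.
Qed.

Lemma big_vote_seq (F : seq nat -> rat) : {in predC uniq, F =1 fun=> 0} ->
  \sum_(v : {perm 'I_m}) F (vote_seq v) = \sum_(s <- bounded_seqs m m) F s.
Proof.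
move=> F0; rewrite [RHS](bigID uniq) /= [X in _ + X]big1 ?addr0; last first.
  by move=> s /F0.
rewrite -big_filter (perm_big (map (@vote_seq m) (enum {perm 'I_m}))).
  by rewrite big_map big_enum.
apply: uniq_perm; rewrite ?filter_uniq ?bounded_seqs_uniq //.
  by rewrite map_inj_uniq ?enum_uniq //; apply: vote_seq_inj.
by move=> s; rewrite mem_filter mem_vote_seqs.
Qed.

End Votes.

Lemma sum_nat_eq_if (R : nmodType) n t (F : nat -> R) :
  \sum_(0 <= x < n) (if x == t then F x else 0) = if (t < n)%N then F t else 0.
Proof. by rewrite -big_mkcond big_nat1_eq. Qed.

Lemma sum_nat_eq_if_mul (R : pzSemiRingType) n t c (F : nat -> R) :
  \sum_(0 <= x < n) (if x == t then c else 0) * F x =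
  if (t < n)%N then c * F t else 0.
Proof.
rewrite -(sum_nat_eq_if _ _ (fun x => c * F x)); apply: eq_bigr => x _.
by case: eqP => [->|]; rewrite ?mul0r.
Qed.

Lemma sum_midpoints (R : numFieldType) (G : nat -> R) n :
  \sum_(0 <= a < n) (G a + G a.+1) / 2 =
  \sum_(0 <= a < n.+1) G a - (G 0%N + G n) / 2.
Proof.
elim: n => [|n IH]; first by rewrite big_geq // big_nat1; field.
by rewrite big_nat_recr //= IH [in RHS]big_nat_recr //=; field.
Qed.

Section ConitzerSteps.

Variable m : nat.

(* The interval [ab] of selected candidates after [x] is ranked next; this is
   meaningful only when [x] is adjacent to [ab]. *)
Definition extend (ab : nat * nat) (x : nat) : nat * nat :=
  if (0 < ab.1)%N && (x == ab.1.-1) then (ab.1.-1, ab.2) else (ab.1, ab.2.+1).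

Definition step_weight (ab : nat * nat) (x : nat) : rat :=
  con_ext m ab.1 ab.2 [:: x].

Definition left_prob (ab : nat * nat) : rat :=
  if (0 < ab.1)%N then (if (ab.2.+1 < m)%N then 2^-1 else 1) else 0.

Definition right_prob (ab : nat * nat) : rat :=
  if (ab.2.+1 < m)%N then (if (0 < ab.1)%N then 2^-1 else 1) else 0.

Lemma con_ext_cons ab x s :
  con_ext m ab.1 ab.2 (x :: s) =
  step_weight ab x * con_ext m (extend ab x).1 (extend ab x).2 s.
Proof.
case: ab => a b; rewrite /step_weight /extend /=.
by case: ifP => _; [|case: ifP => _]; rewrite ?mulr1 ?mul0r.
Qed.

Lemma con_ext_cat ab p r :
  con_ext m ab.1 ab.2 (p ++ r) =
  con_ext m ab.1 ab.2 p *
  con_ext m (foldl extend ab p).1 (foldl extend ab p).2 r.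
Proof.
elim: p ab => [|x p IH] ab; first by rewrite mul1r.
by rewrite cat_cons !con_ext_cons IH mulrA.
Qed.

Lemma step_weightE ab x : (ab.1 <= ab.2)%N ->
  step_weight ab x =
  (if x == ab.1.-1 then left_prob ab else 0) +
  (if x == ab.2.+1 then right_prob ab else 0).
Proof.
case: ab => a b /= le_ab; rewrite /step_weight /left_prob /right_prob /= !mulr1.
by case: (x =P a.-1) => [xa|xa]; case: (x =P b.+1) => [xb|xb]; try lia;
  rewrite /= ?andbT ?andbF ?addr0 ?add0r //=; case: (0 < a)%N.
Qed.

Definition step_mean (g : nat * nat -> rat) (ab : nat * nat) : rat :=
  \sum_(0 <= y < m) step_weight ab y * g (extend ab y).

Lemma step_meanE g ab : (ab.1 <= ab.2 < m)%N ->
  step_mean g ab =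
  left_prob ab * g (ab.1.-1, ab.2) + right_prob ab * g (ab.1, ab.2.+1).
Proof.
case: ab => a b /= /andP[le_ab lt_bm].
rewrite /step_mean; under eq_bigr do rewrite step_weightE // mulrDl.
rewrite big_split /= !sum_nat_eq_if_mul /extend /= eqxx andbT.
have -> : (b.+1 == a.-1) = false by apply/negbTE/eqP; lia.
rewrite andbF ifT; last by lia.
congr (_ + _).
  by case: (posnP a) => [->|a_gt0]; rewrite /left_prob /= ?a_gt0 ?mul0r.
by rewrite /right_prob; case: (b.+1 < m)%N; rewrite ?mul0r.
Qed.

Lemma left_prob_add_right_prob ab : ((0 < ab.1) || (ab.2.+1 < m))%N ->
  left_prob ab + right_prob ab = 1.
Proof.
rewrite /left_prob /right_prob.
by case: ifP; case: ifP => //= _ _ _;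
  rewrite ?addr0 ?add0r // -mulr2n -mulr_natr mulVf.
Qed.

Lemma sum_con_ext_eq1 n ab : (ab.1 <= ab.2 < m)%N -> (n + (ab.2 - ab.1).+1 = m)%N ->
  \sum_(s <- bounded_seqs m n) con_ext m ab.1 ab.2 s = 1.
Proof.
elim: n ab => [|n IH] [a b] /= ab_in n_eq; first by rewrite big_bounded_seqs0.
rewrite big_bounded_seqsS.
under eq_bigr do under eq_bigr do rewrite (con_ext_cons (a, b)).
under eq_bigr do rewrite -big_distrr.
pose mass ab := \sum_(s <- bounded_seqs m n) con_ext m ab.1 ab.2 s.
rewrite -/(step_mean mass (a, b)) step_meanE //= /mass.
rewrite -[RHS](@left_prob_add_right_prob (a, b)) /=; last by lia.
congr (_ + _).
  have [a0|a_gt0] := posnP a; first by rewrite /left_prob a0 mul0r.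
  by rewrite (IH (a.-1, b)) ?mulr1 //=; lia.
have [lt_b1m|b1m] := ltnP b.+1 m; last by rewrite /right_prob ltnNge b1m mul0r.
by rewrite (IH (a, b.+1)) ?mulr1 //=; lia.
Qed.

Lemma step_weight_neq0 ab x : step_weight ab x != 0 ->
  [/\ (0 < ab.1)%N, x = ab.1.-1 & extend ab x = (x, ab.2)] \/
  [/\ (ab.2.+1 < m)%N, x = ab.2.+1 & extend ab x = (ab.1, x)].
Proof.
rewrite /step_weight /extend /=.
case: ifP => [/andP[a_gt0 /eqP ->] _|_]; first by left.
by case: ifP => [/andP[lt_b1m /eqP ->] _|_]; [right|rewrite eqxx].
Qed.

Lemma foldl_extend_interval ab p :
  (ab.1 <= ab.2 < m)%N -> con_ext m ab.1 ab.2 p != 0 ->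
  let cd := foldl extend ab p in
  (cd.1 <= cd.2 < m)%N /\ (cd.2 - cd.1 = ab.2 - ab.1 + size p)%N.
Proof.
elim: p ab => [|x p IH] [a b] ab_in; first by rewrite addn0.
rewrite (con_ext_cons (a, b)) mulf_eq0 negb_or.
move=> /andP[/step_weight_neq0 ext c_neq0] /=.
by case: ext c_neq0 ab_in => -[/= edge -> ->] c_neq0 /= ab_in;
  have /= [] := IH _ _ c_neq0; lia.
Qed.

Lemma con_ext_uniq a b s : con_ext m a b s != 0 -> (a <= b)%N ->
  uniq s && all (fun y => (y < a) || (b < y))%N s.
Proof.
elim: s a b => [|x s IH] a b // + le_ab.
rewrite (con_ext_cons (a, b)) mulf_eq0 negb_or => /andP[/step_weight_neq0 ext].
case: ext => -[/= edge -> ->] /IH /(_ ltac:(simpl; lia)) /andP[-> all_out];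
  rewrite andbT; apply/and3P; split; try lia;
  first [ by apply/negP => /(allP all_out) /=; lia
        | by apply: sub_all all_out => y /=; lia ].
Qed.

(* [m] times the expectation of [g] at the interval formed by the first
   [k.+1] ranked candidates. *)
Definition interval_sum k (g : nat * nat -> rat) : rat :=
  \sum_(0 <= x < m) \sum_(p <- bounded_seqs m k)
    con_ext m x x p * g (foldl extend (x, x) p).

Lemma interval_sumS k g : interval_sum k.+1 g = interval_sum k (step_mean g).
Proof.
apply: eq_bigr => x _; rewrite -addn1 big_bounded_seqs_cat; apply: eq_bigr => p _.
rewrite big_bounded_seqsS /step_mean big_distrr; apply: eq_bigr => y _.
by rewrite big_bounded_seqs0 (con_ext_cat (x, x)) foldl_cat -mulrA.
Qed.

Lemma interval_sumE k g : (k < m)%N ->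
  interval_sum k g =
  \sum_(0 <= a < m - k) g (a, a + k)%N +
  k%:R / 2 * (g (0, k)%N + g (m - k.+1, m.-1)%N).
Proof.
elim: k g => [|k IH] g lt_km.
  rewrite /interval_sum subn0 mul0r addr0; apply: eq_bigr => x _.
  by rewrite big_bounded_seqs0 mul1r addn0.
have [n m_eq] : exists n, m = (n + k.+2)%N by exists (m - k.+2)%N; lia.
pose G a := g (a, a + k.+1)%N.
have meanE a : (a <= n.+1)%N -> step_mean g (a, a + k)%N =
    left_prob (a, a + k)%N * G a.-1 + right_prob (a, a + k)%N * G a.
  move=> le_an; rewrite step_meanE /=; last by lia.
  case: (posnP a) => [->|a_gt0]; first by rewrite /left_prob /= !mul0r.
  by rewrite /G !addnS -[(a.-1 + k).+1]addSn prednK.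
have mean_first : step_mean g (0, k) = G 0%N.
  by rewrite meanE // /left_prob /right_prob /= ifT ?mul0r ?mul1r ?add0r //; lia.
have mean_last : step_mean g (n.+1, n.+1 + k)%N = G n.
  by rewrite meanE // /left_prob /right_prob /= !ifN ?mul0r ?mul1r ?addr0 //; lia.
have mean_mid a :
    (0 <= a < n)%N -> step_mean g (a.+1, a.+1 + k)%N = (G a + G a.+1) / 2.
  move=> /= lt_an; rewrite meanE /left_prob /right_prob /=; last by lia.
  have -> : ((a.+1 + k).+1 < m)%N by lia.
  by rewrite mulrDl !(mulrC 2^-1).
rewrite interval_sumS IH; last by lia.
have -> : (m - k = n.+2)%N by lia.
have -> : (m - k.+1 = n.+1)%N by lia.
have -> : (m - k.+2 = n)%N by lia.
have -> : (m.-1 = n.+1 + k)%N by lia.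
rewrite big_nat_recr // big_nat_recl //= mean_first mean_last.
rewrite (eq_big_nat _ _ mean_mid) sum_midpoints addSnnS.
by rewrite -[k.+1%:R]natr1 /G; field.
Qed.

End ConitzerSteps.

Lemma con_prob_notuniq m s : ~~ uniq s -> con_prob m s = 0.
Proof.
case: s => [|x s] //=; apply: contraNeq; case: ifP => _; last by rewrite eqxx.
rewrite mulf_eq0 negb_or => /andP[_ /con_ext_uniq/(_ (leqnn x))].
move=> /andP[uniq_s out_s].
by rewrite uniq_s andbT; apply/negP => /(allP out_s); rewrite ltnn.
Qed.

Lemma step_weight_sum_con_ext m ab y n :
  (ab.1 <= ab.2 < m)%N -> (n + (ab.2 - ab.1).+2 = m)%N ->
  step_weight m ab y *
    \sum_(r <- bounded_seqs m n) con_ext m (extend ab y).1 (extend ab y).2 r =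
  step_weight m ab y.
Proof.
move=> ab_in n_eq.
have [->|/step_weight_neq0 w_neq0] := eqVneq (step_weight m ab y) 0.
  by rewrite mul0r.
by rewrite sum_con_ext_eq1 ?mulr1 //; case: w_neq0 => -[edge -> ->] /=; lia.
Qed.

Lemma prob_pos_seq m j i : (0 < i <= m)%N ->
  prob_pos m j i =
  \sum_(s <- bounded_seqs m m) con_prob m s * (nth 0%N s i.-1 == j.-1)%:R.
Proof.
move=> i_in; rewrite -big_vote_seq => [|s /con_prob_notuniq ->]; last first.
  by rewrite mul0r.
rewrite /prob_pos big_mkcond; apply: eq_bigr => v _.
have -> : [exists k : 'I_m, (val k == i.-1) && (val (v k) == j.-1)] =
          (nth 0%N (vote_seq v) i.-1 == j.-1).
  have lt_im : (i.-1 < m)%N by lia.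
  apply/existsP/idP => [[k /andP[/eqP <- /eqP <-]]|].
    by rewrite nth_vote_seq.
  by exists (Ordinal lt_im); rewrite eqxx -(nth_vote_seq v (Ordinal lt_im)).
by case: ifP; rewrite ?mulr1 ?mulr0.
Qed.

Lemma prob_pos_peak m j i : (0 < i <= m)%N ->
  prob_pos m j i =
  m%:R^-1 * \sum_(0 <= x < m) \sum_(s <- bounded_seqs m m.-1)
              con_ext m x x s * (nth 0%N (x :: s) i.-1 == j.-1)%:R.
Proof.
case: m => [|m] i_in; first by lia.
rewrite prob_pos_seq // big_bounded_seqsS big_distrr.
apply: eq_big_nat => x /andP[_ lt_xm].
by rewrite big_distrr; apply: eq_bigr => s _; rewrite /= lt_xm mulrA.
Qed.

Lemma prob_pos_top m c : (c < m)%N -> prob_pos m c.+1 1 = m%:R^-1.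
Proof.
move=> lt_cm; rewrite prob_pos_peak /=; last by lia.
under eq_bigr => x _ do under eq_bigr => s _ do rewrite mulr_natr.
rewrite (eq_bigr (fun x =>
  if x == c then \sum_(s <- bounded_seqs m m.-1) con_ext m x x s else 0)).
  by rewrite sum_nat_eq_if lt_cm (@sum_con_ext_eq1 _ _ (c, c)) ?mulr1 //= ?leqnn; lia.
by move=> x _; case: eqP => // _; rewrite big1 // => s _; rewrite mulr0n.
Qed.

Lemma prob_pos_interval m c k : (c < m)%N -> (k.+2 <= m)%N ->
  prob_pos m c.+1 k.+2 =
  m%:R^-1 * interval_sum m k (fun ab => step_weight m ab c).
Proof.
move=> lt_cm le_km; rewrite prob_pos_peak /=; last by lia.
congr (_ * _); apply: eq_big_nat => x /andP[_ lt_xm].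
rewrite (_ : m.-1 = k + (m - k.+2).+1)%N; last by lia.
rewrite big_bounded_seqs_cat big_seq [RHS]big_seq; apply: eq_bigr => p.
rewrite mem_bounded_seqs => /andP[/eqP size_p _].
have [p0|p_neq0] := eqVneq (con_ext m x x p) 0.
  by rewrite p0 mul0r big1 // => s _; rewrite (con_ext_cat m (x, x)) p0 !mul0r.
have /= [st_in st_width] :=
  @foldl_extend_interval m (x, x) p ltac:(simpl; lia) p_neq0.
rewrite big_bounded_seqsS (eq_bigr (fun y =>
  if y == c then con_ext m x x p * step_weight m (foldl extend (x, x) p) c else 0)).
  by rewrite sum_nat_eq_if lt_cm.
move=> y _.
under eq_bigr => r _ do
  rewrite nth_cat size_p ltnn subnn (con_ext_cat m (x, x)) con_ext_cons.
case: eqP => [->|_]; last by rewrite big1 // => r _; rewrite mulr0.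
under eq_bigr do rewrite mulr1.
by rewrite -!big_distrr /= step_weight_sum_con_ext // st_width size_p; lia.
Qed.

Lemma sum_step_weight_intervals m k c : (c < m)%N ->
  \sum_(0 <= a < m - k) step_weight m (a, a + k)%N c =
  (if (c.+1 < m - k)%N then left_prob m (c.+1, c.+1 + k)%N else 0) +
  (if (k < c)%N then right_prob m (c - k.+1, c.-1)%N else 0).
Proof.
move=> lt_cm; under eq_bigr => a _ do rewrite step_weightE ?leq_addr //=.
rewrite big_split /=; congr (_ + _).
  rewrite -(sum_nat_eq_if _ _ (fun a => left_prob m (a, a + k)%N)).
  apply: eq_bigr => -[|a] _ /=; first by rewrite /left_prob /= !if_same.
  by rewrite eqSS eq_sym.
have [lt_kc|le_ck] := ltnP k c; last by rewrite big1 // => a _; rewrite ifN //; lia.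
have -> : right_prob m (c - k.+1, c.-1)%N =
          if (c - k.+1 < m - k)%N then right_prob m (c - k.+1, c - k.+1 + k)%N else 0.
  by rewrite ifT; [congr right_prob; congr pair|]; lia.
rewrite -(sum_nat_eq_if _ _ (fun a => right_prob m (a, a + k)%N)).
apply: eq_bigr => a _.
by congr (if _ then _ else _); apply/eqP/eqP; lia.
Qed.

Lemma step_weight_left_end m k c : (k.+2 <= m)%N ->
  step_weight m (0, k) c = if c == k.+1 then 1 else 0.
Proof.
move=> le_km; rewrite step_weightE // /left_prob /right_prob /= if_same add0r.
by have -> : (k.+1 < m)%N by lia.
Qed.

Lemma step_weight_right_end m k c : (k.+2 <= m)%N ->
  step_weight m (m - k.+1, m.-1)%N c = if c == (m - k.+2)%N then 1 else 0.
Proof.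
move=> le_km; rewrite step_weightE /left_prob /right_prob /=; last by lia.
have -> : (0 < m - k.+1)%N by lia.
have -> : ((m.-1).+1 < m)%N = false by lia.
by rewrite if_same addr0 (_ : (m - k.+1).-1 = m - k.+2)%N //; lia.
Qed.

Definition pos_mass (m i c : nat) : rat :=
  if i is k.+1 then
    (if (c.+1 < m - k)%N then left_prob m (c.+1, c.+1 + k)%N else 0)
    + (if (k < c)%N then right_prob m (c - k.+1, c.-1)%N else 0)
    + k%:R / 2 * ((if c == k.+1 then 1 else 0) +
                   (if c == (m - k.+2)%N then 1 else 0))
  else 1.

Lemma prob_posE m c i : (c < m)%N -> (i < m)%N ->
  prob_pos m c.+1 i.+1 = m%:R^-1 * pos_mass m i c.
Proof.
case: i => [|k] lt_cm lt_km; first by rewrite prob_pos_top // mulr1.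
rewrite prob_pos_interval // interval_sumE; last by lia.
by rewrite sum_step_weight_intervals // step_weight_left_end // step_weight_right_end.
Qed.

Ltac decide_ifs :=
  repeat match goal with
  | |- context [if ?b then _ else _] =>
      first [ have -> : b by lia
            | have -> : b = false by lia
            | let E := fresh "E" in case E : b ]
  end.

Lemma pos_mass_mirror m i c : (c < m)%N -> (i < m)%N ->
  pos_mass m i (m.-1 - c) = pos_mass m i c.
Proof.
case: i => [|k] // lt_cm lt_km; rewrite /pos_mass /left_prob /right_prob /=.
decide_ifs; ring.
Qed.

Lemma prob_pos_mirror m j i : (0 < j <= m)%N -> (0 < i <= m)%N ->
  prob_pos m j i = prob_pos m (m - j + 1) i.
Proof.
case: j i => [|c] [|i] // /andP[_ le_cm] /andP[_ le_im].
rewrite (_ : m - c.+1 + 1 = (m.-1 - c).+1)%N; last by lia.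
by rewrite !prob_posE ?pos_mass_mirror //; lia.
Qed.

Lemma prob_pos_left_half m j i : (0 < j)%N -> (j.*2 <= m)%N -> (0 < i <= m)%N ->
  prob_pos m j i =
    (if (i < j)%N then 2%:R / (2 * m)%:R
     else if i == j then (j + 1)%:R / (2 * m)%:R
     else if (i < m - j + 1)%N then 1 / (2 * m)%:R
     else if i == (m - j + 1)%N then (m - j + 1)%:R / (2 * m)%:R
     else 0).
Proof.
case: j => // c _ le_cm; case: i => // i /andP[_ le_im].
have m_neq0 : (m%:R : rat) != 0 by rewrite pnatr_eq0; lia.
rewrite prob_posE; [|lia|lia].
rewrite ltnS eqSS (_ : m - c.+1 + 1 = m - c)%N; last by lia.
case: (ltngtP i c) => [lt_ic|lt_ci|eq_ic].
- by case: i lt_ic le_im => [|k] lt_kc le_km;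
    rewrite /pos_mass /left_prob /right_prob /=; decide_ifs; rewrite natrM; field.
- case: i lt_ci le_im => [|k] lt_ck le_km //.
  rewrite /pos_mass /left_prob /right_prob /=.
  by case: (ltngtP k.+2 (m - c)) => [lt_kmc|gt_kmc|eq_kmc]; rewrite -?eq_kmc;
    decide_ifs; rewrite ?natrM; field.
- subst i; by case: c le_cm le_im => [|k] le_km le_k;
    rewrite /pos_mass /left_prob /right_prob /=; decide_ifs; rewrite natrM; field.
Qed.

Theorem theorem4 (m : nat) :
  ~~ odd m ->
  (forall j i : nat, (1 <= j <= m %/ 2)%N -> (1 <= i <= m)%N ->
     prob_pos m j i =
       (if (i < j)%N then 2%:R / (2 * m)%:R
        else if i == j then (j + 1)%:R / (2 * m)%:R
        else if (i < m - j + 1)%N then 1 / (2 * m)%:R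
        else if i == (m - j + 1)%N then (m - j + 1)%:R / (2 * m)%:R
        else 0))
  /\
  (forall j i : nat, (1 <= j <= m)%N -> (1 <= i <= m)%N ->
     prob_pos m j i = prob_pos m (m - j + 1) i).
Proof.
move=> _; split=> j i /andP[j_gt0 le_jm] i_in.
  by apply: prob_pos_left_half => //; lia.
by apply: prob_pos_mirror; rewrite ?j_gt0.
Qed.
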